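(* For $r\ge0$ and integers $M\ge1$, $N\ge1$ let $$\eta(r,M,N):=\int_0^\infty\frac{1}{(1+e^{8r}\gamma^2)^M}\Big(\frac{\gamma^2}{1+\gamma^2}\Big)^N\frac{d\gamma}{\gamma^2}.$$ Then: (i) $\frac\pi2e^{-4r}c^{(M)}_1\le\eta(r,M,1)\le\frac\pi2e^{-4r}c^{(M-1)}_1$; (ii) if $M>N$: $\frac{1}{2^M2^N}e^{-8(M+1)r}\frac{1}{2M+1}\le\eta(r,M,N)\le e^{-8r(N-1)-4r}\frac\pi2c^{(M-N)}_N+e^{-8Mr}\frac{1}{2M-1}$; (iii) if $M\le N$: $\frac{1}{2^M2^N}e^{-8(M+1)r}\frac{1}{2M+1}\le\eta(r,M,N)\le e^{-8r(M-1)-4r}\frac\pi2c^{(0)}_M+e^{-8Mr}\frac{1}{2M-1}$.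
   Context: For integers $k\ge1$, $j\ge0$: $c^{(j)}_k:=\frac2\pi\int_0^\infty\Big(\frac{\gamma^2}{1+\gamma^2}\Big)^k\frac{1}{(1+\gamma^2)^j}\frac{d\gamma}{\gamma^2}=\frac1\pi\frac{\Gamma(j+\frac12)\Gamma(k-\frac12)}{\Gamma(j+k)}$, with $\Gamma$ the Gamma function. *)

From HB Require Import structures.
From mathcomp Require Import all_boot all_order all_algebra.
From mathcomp Require Import all_classical all_reals all_analysis.
Set Implicit Arguments. Unset Strict Implicit. Unset Printing Implicit Defensive.
Import Order.TTheory GRing.Theory Num.Theory.
Local Open Scope classical_set_scope.
Local Open Scope ring_scope.

Definition cjk (R : realType) (j k : nat) : \bar R :=
  ((2 / pi)%:E *
   \int[lebesgue_measure]_(g in `]0%R, +oo[%classic)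
      (((g ^+ 2 / (1 + g ^+ 2)) ^+ k * (1 + g ^+ 2) ^- j / g ^+ 2 : R)%:E))%E.

Definition eta_rMN (R : realType) (r : R) (M N : nat) : \bar R :=
  \int[lebesgue_measure]_(g in `]0%R, +oo[%classic)
     (((1 + expR (8 * r) * g ^+ 2) ^- M * (g ^+ 2 / (1 + g ^+ 2)) ^+ N
        / g ^+ 2 : R)%:E).

From HB Require Import structures.
From mathcomp Require Import all_boot all_order all_algebra.
From mathcomp Require Import all_classical all_reals all_analysis.
From mathcomp Require Import ring lra zify measurable_realfun.
Import Order.TTheory GRing.Theory Num.Theory numFieldNormedType.Exports.
Local Open Scope ring_scope.
Local Open Scope classical_set_scope.

(** Write b = e^(4r) and H_(j,k) for the integrand of c^(j)_k.  Then
    eta(r,M,N) = int_0^oo (1 + b^2 x^2)^(-M) H_(0,N)(x) dx, and the substitution u = b x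
    gives int_0^oo H_(j,k)(b x) dx = (pi/2) b^(-1) c^(j)_k.  All upper bounds come from
    H_(0,N)(x) <= x^(2(k-1)) for 1 <= k <= N: when also k <= M this gives
    eta(r,M,N) <= b^(-2(k-1)) int_0^oo H_(M-k,k)(b x) dx, and k = 1, N, M yield (i), (ii),
    (iii).  The lower bound in (i) is
    1 + x^2 <= 1 + b^2 x^2.  The other lower bound keeps only x >= 1, where
    1 + b^2 x^2 <= 2 b^2 x^2 and 1 + x^2 <= 2 x^2, and uses int_1^oo x^(-2M-2) dx = 1/(2M+1). *)

Section halfline_integrals.
Variable R : realType.
Notation mu := (@lebesgue_measure R).

Lemma within_continuous_measurable_EFin (D : set R) (f : R -> R) :
  measurable D -> {within D, continuous f} -> measurable_fun D (EFin \o f).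
Proof.
by move=> mD cf; apply/measurable_EFinP; exact: subspace_continuous_measurable_fun.
Qed.

Lemma le_continuous_integral (D : set R) (f g : R -> R) : measurable D ->
  {within D, continuous f} -> {within D, continuous g} ->
  (forall x, D x -> 0 <= f x) -> (forall x, D x -> f x <= g x) ->
  (\int[mu]_(x in D) (f x)%:E <= \int[mu]_(x in D) (g x)%:E)%E.
Proof.
move=> mD cf cg f0 fg; apply: ge0_le_integral => //.
all: exact: within_continuous_measurable_EFin.
Qed.

Lemma ge0_continuous_integralZl (D : set R) (c : R) (f : R -> R) :
  measurable D -> 0 <= c -> {within D, continuous f} -> (forall x, D x -> 0 <= f x) ->
  (\int[mu]_(x in D) (c * f x)%:E = c%:E * \int[mu]_(x in D) (f x)%:E)%E.
Proof.
move=> mD c0 cf f0; rewrite -ge0_integralZl_EFin //.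
exact: within_continuous_measurable_EFin.
Qed.

Lemma ge0_integral_itvoy_scale (G : R -> R) (b : R) : 0 < b -> continuous G ->
  (forall x, 0 < x -> 0 <= G x) ->
  (\int[mu]_(x in `]0%R, +oo[) (G x)%:E =
   \int[mu]_(x in `]0%R, +oo[) (b * G (b * x))%:E)%E.
Proof.
move=> b0 cG G0.
have cF : continuous ( *%R b).
  by move=> x; apply: continuousM; [exact: cst_continuous | exact: cvg_id].
have dF x : derivable ( *%R b) x 1.
  by apply: derivableM; [exact: derivable_cst | exact: derivable_id].
have F' : ( *%R b)^`() = fun=> b.
  by apply/funext => x; rewrite (derive1Ml (f:=id)) ?derive1_id ?mulr1.
have cGF : continuous (fun x => b * G (b * x)).
  move=> x; apply: continuousM; first exact: cst_continuous.
  exact: (continuous_comp (cF x) (cG _)).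
rewrite integral_itv_obnd_cbnd; last first.
  by apply: within_continuous_measurable_EFin => //; exact: continuous_subspaceT.
have := @increasing_ge0_integration_by_substitutiony R ( *%R b) G 0.
rewrite mulr0 => ->; last 8 first.
- by move=> x y _ _ xy; rewrite ltr_pM2l.
- by rewrite F' => x _; exact: cst_continuous.
- by rewrite F'; exact: is_cvg_cst.
- by rewrite F'; exact: is_cvg_cst.
- by split=> [x _|]; [exact: dF | apply: cvg_at_right_filter; exact: cF].
- apply/cvgryPge => A.
  by near do rewrite -ler_pdivrMl //; apply: nbhs_pinfty_ge; exact: num_real.
- exact: continuous_subspaceT.
- by move=> x; rewrite in_itv /= andbT; exact: G0.
rewrite -integral_itv_obnd_cbnd; last first.
  apply: within_continuous_measurable_EFin => //; apply: continuous_subspaceT.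
  by rewrite F' mulrC.
by apply: eq_integral => x _ /=; rewrite F' mulrC.
Unshelve. all: by end_near.
Qed.

Lemma continuous_invXn n (x : R) : x != 0 -> {for x, continuous (fun y : R => y ^- n)}.
Proof. by move=> x0; apply: continuousV; [rewrite expf_neq0 | exact: exprn_continuous]. Qed.

Lemma integral_itvcy1_invXn (n : nat) :
  (\int[mu]_(x in `[1%R, +oo[) (x ^- n.+2)%:E = (n.+1%:R^-1)%:E)%E.
Proof.
pose F (x : R) := - (n.+1%:R * x ^+ n.+1)^-1.
have F' (x : R) : x != 0 -> is_derive x 1 F ((x ^+ n.+2)^-1).
  move=> x0; apply: is_derive_eq.
    apply: is_deriveN; apply: is_deriveV; first by rewrite mulf_neq0 ?pnatr_eq0 ?expf_neq0.
    apply: is_deriveZ; have := is_deriveX n.+1 (is_derive_id x 1).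
    by rewrite exprfctE; apply.
  have xn0 : x ^+ n != 0 by rewrite expf_neq0.
  rewrite /GRing.scale /= !exprS.
  by field; rewrite xn0 x0 addrC natr1 pnatr_eq0.
have Finfty : F x @[x --> +oo] --> 0.
  rewrite -oppr0; apply: cvgN; apply/gtr0_cvgV0.
    by near=> x; rewrite mulr_gt0 ?ltr0n ?exprn_gt0.
  apply/cvgryPge => A; near=> x.
  have x1 : 1 <= x by near: x; apply: nbhs_pinfty_ge; exact: num_real.
  have xA : A <= x by near: x; apply: nbhs_pinfty_ge; exact: num_real.
  apply: (le_trans xA); apply: (le_trans (ler_eXnr (ltn0Sn _) x1)).
  by apply: ler_peMl; rewrite ?ler1n // exprn_ge0 // (le_trans ler01).
have ge1_neq0 (x : R) : 1 <= x -> x != 0.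
  by move=> x1; rewrite gt_eqF // (lt_le_trans ltr01).
rewrite (@ge0_continuous_FTC2y R _ F 1 0); last 6 first.
- by move=> x x1; rewrite invr_ge0 exprn_ge0 // (le_trans ler01).
- apply: continuous_in_subspaceT => x; rewrite inE /= in_itv /= andbT => x1.
  exact/continuous_invXn/ge1_neq0.
- exact: Finfty.
- by move=> x x1; apply: ex_derive; apply: F'; apply/ge1_neq0/ltW.
- apply: cvg_at_right_filter; apply: differentiable_continuous; apply/derivable1_diffP.
  by apply: ex_derive; apply: F'; exact: oner_neq0.
- move=> x; rewrite in_itv /= andbT => x1.
  by rewrite derive1E; apply: derive_val; apply: F'; apply/ge1_neq0/ltW.
by rewrite -EFinB /F expr1n mulr1 sub0r opprK.
Unshelve. all: by end_near.
Qed.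

End halfline_integrals.

Section eta_bounds.
Variable R : realType.
Notation mu := (@lebesgue_measure R).

Lemma oneDsqr_gt0 (u : R) : 0 < 1 + u ^+ 2.
Proof. by rewrite ltr_pwDl // sqr_ge0. Qed.

Definition cjk_integrand (j k : nat) (u : R) : R :=
  (u ^+ 2) ^+ k.-1 / (1 + u ^+ 2) ^+ (k + j).

Lemma cjk_integrandE j k u : (0 < k)%N -> 0 < u ->
  (u ^+ 2 / (1 + u ^+ 2)) ^+ k * (1 + u ^+ 2) ^- j / u ^+ 2 = cjk_integrand j k u.
Proof.
case: k => // k _ u0; have u2 : u ^+ 2 != 0 by rewrite sqrf_eq0 gt_eqF.
have D0 : 1 + u ^+ 2 != 0 by rewrite gt_eqF // oneDsqr_gt0.
rewrite /cjk_integrand /= expr_div_n; move: u2 D0; set t := u ^+ 2 => u2 D0.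
by rewrite addSn !exprS exprD; field; rewrite D0 u2 !(expf_neq0 _ D0).
Qed.

Lemma cjk_integrand_ge0 j k u : 0 <= cjk_integrand j k u.
Proof. by rewrite divr_ge0 // exprn_ge0 // (sqr_ge0, ltW (oneDsqr_gt0 u)). Qed.

Lemma continuous_cjk_integrand j k (x : R) : {for x, continuous (cjk_integrand j k)}.
Proof.
rewrite /cjk_integrand; apply: continuousM.
  exact: (continuous_comp (@exprn_continuous R 2 x) (@exprn_continuous R k.-1 _)).
apply: continuousV; first by rewrite expf_neq0 // gt_eqF // oneDsqr_gt0.
apply: (continuous_comp _ (@exprn_continuous R (k + j) _)).
by apply: continuousD; [exact: cst_continuous | exact: exprn_continuous].
Qed.

Lemma continuous_scaled_cjk_integrand j k (b x : R) :
  {for x, continuous (fun x => cjk_integrand j k (b * x))}.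
Proof.
apply: continuous_comp; last exact: continuous_cjk_integrand.
by apply: continuousM; [exact: cst_continuous | exact: cvg_id].
Qed.

Lemma cjkE j k : (0 < k)%N ->
  cjk R j k = ((2 / pi)%:E * \int[mu]_(x in `]0%R, +oo[) (cjk_integrand j k x)%:E)%E.
Proof.
move=> k0; congr (_ * _)%E; apply: eq_integral => x.
by rewrite inE /= in_itv /= andbT => x0; rewrite cjk_integrandE.
Qed.

Lemma integral_scaled_cjk_integrand j k (b : R) : (0 < k)%N -> 0 < b ->
  (\int[mu]_(x in `]0%R, +oo[) (cjk_integrand j k (b * x))%:E =
   (pi / 2 / b)%:E * cjk R j k)%E.
Proof.
move=> k0 b0; have pi0 : pi != 0 :> R by rewrite gt_eqF // pi_gt0.
rewrite cjkE //.
rewrite (@ge0_integral_itvoy_scale _ _ b b0 (@continuous_cjk_integrand j k)); last first.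
  by move=> x _; exact: cjk_integrand_ge0.
rewrite ge0_continuous_integralZl ?ltW //; last 2 first.
- exact/continuous_subspaceT/continuous_scaled_cjk_integrand.
- by move=> x _; exact: cjk_integrand_ge0.
rewrite !muleA -!EFinM [X in X%:E](_ : _ = 1) ?mul1e //.
by move: (pi : R) pi0 => p p0; field; rewrite p0 gt_eqF.
Qed.

Definition eta_integrand (b : R) (M N : nat) (x : R) : R :=
  ((1 + (b * x) ^+ 2) ^+ M)^-1 * cjk_integrand 0 N x.

Lemma eta_integrand_ge0 b M N x : 0 <= eta_integrand b M N x.
Proof.
by rewrite mulr_ge0 ?cjk_integrand_ge0 // invr_ge0 exprn_ge0 // ltW // oneDsqr_gt0.
Qed.

Lemma continuous_eta_integrand b M N (x : R) : {for x, continuous (eta_integrand b M N)}.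
Proof.
rewrite /eta_integrand; apply: continuousM; last exact: continuous_cjk_integrand.
apply: continuousV; first by rewrite expf_neq0 // gt_eqF // oneDsqr_gt0.
apply: (continuous_comp _ (@exprn_continuous R M _)).
apply: continuousD; first exact: cst_continuous.
apply: (continuous_comp _ (@exprn_continuous R 2 _)).
by apply: continuousM; [exact: cst_continuous | exact: cvg_id].
Qed.

Lemma eta_rMNE r M N : (0 < N)%N ->
  eta_rMN r M N = (\int[mu]_(x in `]0%R, +oo[) (eta_integrand (expR (4 * r)) M N x)%:E)%E.
Proof.
move=> N0; apply: eq_integral => x; rewrite inE /= in_itv /= andbT => x0.
have e8 : expR (4 * r) ^+ 2 = expR (8 * r) by rewrite -expRM_natl; congr expR; ring.
rewrite /eta_integrand -cjk_integrandE // expr0 invr1 mulr1.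
by rewrite [(expR _ * x) ^+ 2]exprMn e8 [in RHS]mulrA.
Qed.

Lemma expr_div_expD_le (t : R) k N : 0 <= t -> (0 < k <= N)%N ->
  t ^+ N.-1 / (1 + t) ^+ N <= t ^+ k.-1.
Proof.
move=> t0 /andP[k0 kN]; have -> : N.-1 = (k.-1 + (N - k))%N by lia.
rewrite exprD -mulrA ler_piMr ?exprn_ge0 // ler_pdivrMr ?exprn_gt0 ?mul1r //; last by lra.
apply: (le_trans (y := (1 + t) ^+ (N - k))).
  by apply: lerXn2r; rewrite ?nnegrE; lra.
by apply: ler_weXn2l; [lra | rewrite leq_subr].
Qed.

Lemma eta_integrand_le b M N k x : (0 < k <= N)%N ->
  eta_integrand b M N x <= (x ^+ 2) ^+ k.-1 / (1 + (b * x) ^+ 2) ^+ M.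
Proof.
move=> kN; rewrite /eta_integrand /cjk_integrand addn0 mulrC ler_wpM2r //.
- by rewrite invr_ge0 exprn_ge0 // ltW // oneDsqr_gt0.
- exact: expr_div_expD_le (sqr_ge0 _) kN.
Qed.

Lemma scaled_cjk_integrandE (b x : R) M k : b != 0 -> (k <= M)%N ->
  ((b ^+ 2) ^+ k.-1)^-1 * cjk_integrand (M - k) k (b * x) =
  (x ^+ 2) ^+ k.-1 / (1 + (b * x) ^+ 2) ^+ M.
Proof.
move=> b0 kM; have Bk : (b ^+ 2) ^+ k.-1 != 0 by rewrite !expf_neq0.
rewrite /cjk_integrand subnKC // (exprMn 2 b x).
by move: (b ^+ 2) (x ^+ 2) Bk => B t Bk; rewrite exprMn mulrA mulKf.
Qed.

Lemma eta_le_cjk (r : R) M N k : (0 < k)%N -> (k <= M)%N -> (k <= N)%N ->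
  (eta_rMN r M N <=
   (expR (- (8 * r * (k%:R - 1)) - 4 * r) * (pi / 2))%:E * cjk R (M - k) k)%E.
Proof.
move=> k0 kM kN; set b := expR (4 * r); have b0 : 0 < b := expR_gt0 _.
set c := ((b ^+ 2) ^+ k.-1)^-1.
have -> : expR (- (8 * r * (k%:R - 1)) - 4 * r) * (pi / 2) = c * (pi / 2 / b).
  have e8 : expR (8 * r) = b ^+ 2 by rewrite -expRM_natl; congr expR; ring.
  have -> : k%:R - 1 = k.-1%:R :> R by rewrite -[in LHS](prednK k0) -natr1 addrK.
  rewrite expRD !expRN expRM_natr e8 -/b.
  by rewrite /c; ring.
have cH (x : R) : {for x, continuous (fun x => c * cjk_integrand (M - k) k (b * x))}.
  apply: continuousM; first exact: cst_continuous.
  exact: continuous_scaled_cjk_integrand.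
rewrite EFinM -muleA -integral_scaled_cjk_integrand // -ge0_continuous_integralZl //;
  last 3 first.
- by rewrite invr_ge0 !exprn_ge0 // ltW.
- exact/continuous_subspaceT/continuous_scaled_cjk_integrand.
- by move=> x _; exact: cjk_integrand_ge0.
rewrite eta_rMNE; last exact: leq_trans kN.
apply: le_continuous_integral => //.
- exact/continuous_subspaceT/continuous_eta_integrand.
- exact/continuous_subspaceT/cH.
- by move=> x _; exact: eta_integrand_ge0.
- move=> x _; rewrite /c scaled_cjk_integrandE ?gt_eqF //.
  by apply: eta_integrand_le; rewrite k0.
Qed.

Lemma scaled_cjk_integrand_le_eta_integrand (b x : R) M : 1 <= b ->
  cjk_integrand M 1 (b * x) <= eta_integrand b M 1 x.
Proof.
move=> b1; rewrite /eta_integrand /cjk_integrand /= !expr0 !div1r ?addn0 expr1.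
rewrite add1n exprS invfM mulrC ler_wpM2l //.
  by rewrite invr_ge0 exprn_ge0 // ltW // oneDsqr_gt0.
rewrite lef_pV2 ?posrE ?oneDsqr_gt0 // lerD2l exprMn ler_peMl ?sqr_ge0 //.
by rewrite expr_ge1 // (le_trans ler01).
Qed.

Lemma cjk_le_eta (r : R) M : 0 <= r ->
  (((pi / 2) * expR (- (4 * r)))%:E * cjk R M 1 <= eta_rMN r M 1)%E.
Proof.
move=> r0; set b := expR (4 * r); have b1 : 1 <= b by rewrite -expR0 ler_expR; lra.
rewrite expRN -/b -integral_scaled_cjk_integrand ?(lt_le_trans ltr01) // eta_rMNE //.
apply: le_continuous_integral => //.
- exact/continuous_subspaceT/continuous_scaled_cjk_integrand.
- exact/continuous_subspaceT/continuous_eta_integrand.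
- by move=> x _; exact: cjk_integrand_ge0.
- by move=> x _; exact: scaled_cjk_integrand_le_eta_integrand.
Qed.

Lemma eta_integrand_ge (b x : R) M N : 1 <= b -> 1 <= x -> (0 < N)%N ->
  (2 ^+ M * 2 ^+ N * (b ^+ 2) ^+ M.+1)^-1 * x ^- M.*2.+2 <= eta_integrand b M N x.
Proof.
move=> b1 x1; case: N => // n _.
rewrite /eta_integrand /cjk_integrand addn0 /= (exprMn 2 b x).
rewrite -[M.*2.+2]/(M.+1).*2 -mul2n exprM.
have B1 : 1 <= b ^+ 2 by rewrite expr_ge1 // (le_trans ler01).
have t1 : 1 <= x ^+ 2 by rewrite expr_ge1 // (le_trans ler01).
move: (b ^+ 2) (x ^+ 2) B1 t1 => B t B1 t1.
have Bt1 : 1 <= B * t by rewrite mulr_ege1.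
have -> : (2 ^+ M * 2 ^+ n.+1 * B ^+ M.+1)^-1 * (t ^+ M.+1)^-1 =
    ((2 * B * t) ^+ M * B)^-1 * (2 ^+ n.+1 * t)^-1.
  by rewrite -!invfM !exprMn !exprS; congr GRing.inv; ring.
apply: ler_pM.
- by rewrite invr_ge0 mulr_ge0 ?exprn_ge0 //; lra.
- by rewrite invr_ge0 mulr_ge0 ?exprn_ge0 //; lra.
- rewrite lef_pV2 ?posrE ?exprn_gt0 ?mulr_gt0 ?exprn_gt0 //; try lra.
  apply: (le_trans (y := (2 * B * t) ^+ M)); last by rewrite ler_peMr ?exprn_ge0 //; lra.
  by apply: lerXn2r; rewrite ?nnegrE; lra.
- have t0 : t != 0 by rewrite gt_eqF //; lra.
  have -> : (2 ^+ n.+1 * t)^-1 = t ^+ n / (2 * t) ^+ n.+1.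
    rewrite exprMn !exprS; field.
    by rewrite (expf_neq0 _ t0) t0 expf_eq0 pnatr_eq0 andbF.
  apply: ler_wpM2l; first by rewrite exprn_ge0 //; lra.
  rewrite lef_pV2 ?posrE ?exprn_gt0 //; try lra.
  by apply: lerXn2r; rewrite ?nnegrE; lra.
Qed.

Lemma tail_le_eta (r : R) M N : 0 <= r -> (0 < N)%N ->
  ((1 / (2 ^+ M * 2 ^+ N) * expR (- (8 * (M%:R + 1) * r)) / (2 * M%:R + 1))%:E
    <= eta_rMN r M N)%E.
Proof.
move=> r0 N0; set b := expR (4 * r); have b1 : 1 <= b by rewrite -expR0 ler_expR; lra.
set C := (2 ^+ M * 2 ^+ N * (b ^+ 2) ^+ M.+1)^-1.
have C0 : 0 <= C.
  by rewrite invr_ge0; do 2?apply: mulr_ge0; apply: exprn_ge0; rewrite ?sqr_ge0 ?ler0n.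
have -> : 1 / (2 ^+ M * 2 ^+ N) * expR (- (8 * (M%:R + 1) * r)) / (2 * M%:R + 1) =
    C * (M.*2.+1%:R)^-1.
  have e8 : expR (8 * r) = b ^+ 2 by rewrite -expRM_natl; congr expR; ring.
  rewrite natr1 [8 * _ * r]mulrAC expRN expRM_natr e8 -[M.*2.+1%:R]natr1 -mul2n natrM.
  by rewrite /C div1r -invfM.
have cX (x : R) : 1 <= x -> {for x, continuous (fun y : R => y ^- M.*2.+2)}.
  by move=> x1; apply: continuous_invXn; rewrite gt_eqF // (lt_le_trans ltr01).
have cCX (x : R) : 1 <= x -> {for x, continuous (fun y : R => C * y ^- M.*2.+2)}.
  by move=> x1; apply: continuousM; [exact: cst_continuous | exact: cX].
rewrite EFinM -integral_itvcy1_invXn -ge0_continuous_integralZl //; last 2 first.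
- by apply: continuous_in_subspaceT => x; rewrite inE /= in_itv /= andbT; exact: cX.
- move=> x; rewrite /= in_itv /= andbT => x1.
  by rewrite invr_ge0 exprn_ge0 // (le_trans ler01).
rewrite eta_rMNE //.
apply: (@le_trans _ _ (\int[mu]_(x in `[1%R, +oo[) (eta_integrand b M N x)%:E)%E).
  apply: le_continuous_integral => //.
  - by apply: continuous_in_subspaceT => x; rewrite inE /= in_itv /= andbT; exact: cCX.
  - exact/continuous_subspaceT/continuous_eta_integrand.
  - move=> x; rewrite /= in_itv /= andbT => x1.
    by rewrite mulr_ge0 // invr_ge0 exprn_ge0 // (le_trans ler01).
  - by move=> x; rewrite /= in_itv /= andbT => x1; exact: eta_integrand_ge.
apply: ge0_subset_integral => //.
- apply: within_continuous_measurable_EFin => //.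
  exact/continuous_subspaceT/continuous_eta_integrand.
- by move=> x _; rewrite lee_fin eta_integrand_ge0.
- by move=> x; rewrite /= !in_itv /= !andbT => x1; apply: lt_le_trans x1.
Qed.

End eta_bounds.

Theorem lemma5p4 (R : realType) (r : R) (M N : nat) :
  0 <= r -> (1 <= M)%N -> (1 <= N)%N ->
  (* (i) *)
  ((((pi / 2) * expR (- (4 * r)))%:E * cjk R M 1 <= eta_rMN r M 1)%E /\
   (eta_rMN r M 1 <= ((pi / 2) * expR (- (4 * r)))%:E * cjk R (M - 1) 1)%E) /\
  (* (ii) *)
  ((N < M)%N ->
     ((1 / (2 ^+ M * 2 ^+ N) * expR (- (8 * (M%:R + 1) * r)) / (2 * M%:R + 1))%:E
        <= eta_rMN r M N)%E /\
     (eta_rMN r M N <=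
        (expR (- (8 * r * (N%:R - 1)) - 4 * r) * (pi / 2))%:E * cjk R (M - N) N
        + (expR (- (8 * M%:R * r)) / (2 * M%:R - 1))%:E)%E) /\
  (* (iii) *)
  ((M <= N)%N ->
     ((1 / (2 ^+ M * 2 ^+ N) * expR (- (8 * (M%:R + 1) * r)) / (2 * M%:R + 1))%:E
        <= eta_rMN r M N)%E /\
     (eta_rMN r M N <=
        (expR (- (8 * r * (M%:R - 1)) - 4 * r) * (pi / 2))%:E * cjk R 0 M
        + (expR (- (8 * M%:R * r)) / (2 * M%:R - 1))%:E)%E).
Proof.
move=> r0 M0 N0.
have extra_ge0 : (0 <= (expR (- (8 * M%:R * r)) / (2 * M%:R - 1))%:E)%E.
  have M1 : 1 <= M%:R :> R by rewrite ler1n.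
  by rewrite lee_fin divr_ge0 ?expR_ge0 // subr_ge0; lra.
split; [split | split => [NM | MN]; split].
- exact: cjk_le_eta.
- have := @eta_le_cjk R r M 1 1 (ltn0Sn 0) M0 (leqnn 1).
  by rewrite subrr mulr0 oppr0 sub0r mulrC.
- exact: tail_le_eta.
- by apply: lee_paddr extra_ge0 _; apply: eta_le_cjk => //; exact: ltnW.
- exact: tail_le_eta.
- apply: lee_paddr extra_ge0 _; rewrite -[X in cjk _ X M](subnn M).
  exact: eta_le_cjk.
Qed.
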